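(* Every $W$-space is strongly $C$-selective.
   Context: All spaces are assumed $T_1$. For spaces $Y$ and $X$, a map $\varphi: Y\to\mathcal P(X)\setminus\{\emptyset\}$ is lower semicontinuous (l.s.c.) if for every open $U\subseteq X$ the set $\varphi^{-1}(U)=\{y\in Y:\varphi(y)\cap U\neq\emptyset\}$ is open in $Y$. A selection of $\varphi$ is a map $f:Y\to X$ with $f(y)\in\varphi(y)$ for all $y$. $X$ is strongly $Y$-selective if every l.s.c. map $Y\to\mathcal P(X)\setminus\{\emptyset\}$ has a continuous selection, and $X$ is strongly $C$-selective if it is strongly $Y$-selective for every countable regular space $Y$. For $x\in X$ consider the game in which, at stage $n$, player I chooses an open set $U_n\ni x$ and player II chooses a point $x_n\in U_n$; player I wins if the sequence $(x_n)$ converges to $x$. $X$ is a $W$-space if player I has a winning strategy in this game at every point $x\in X$. *)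

From HB Require Import structures.
From mathcomp Require Import all_boot all_order.
From mathcomp Require Import all_classical all_reals all_analysis.
Set Implicit Arguments. Unset Strict Implicit. Unset Printing Implicit Defensive.
Local Open Scope classical_set_scope.

Definition lsc_map (Y X : topologicalType) (phi : Y -> set X) : Prop :=
  (forall y, phi y !=set0) /\
  (forall U : set X, open U -> open [set y | phi y `&` U !=set0]).

Definition strongly_selective (Y X : topologicalType) : Prop :=
  forall phi : Y -> set X, lsc_map phi ->
    exists f : Y -> X, continuous f /\ (forall y, phi y (f y)).

Definition strongly_C_selective (X : topologicalType) : Prop :=
  forall Y : topologicalType,
    @accessible_space Y -> @regular_space Y ->
    countable [set: Y] -> strongly_selective Y X.

(* A strategy for player I at x: given the finite history of II's moves
   [x_0; ...; x_{n-1}], I plays an open set containing x. *)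
Definition strategyI (X : topologicalType) (x : X) (s : seq X -> set X) : Prop :=
  forall h, open (s h) /\ s h x.

Definition winning_strategyI (X : topologicalType) (x : X) (s : seq X -> set X) : Prop :=
  strategyI x s /\
  forall u : nat -> X, (forall n, s (mkseq u n) (u n)) -> u @ \oo --> x.

Definition W_space (X : topologicalType) : Prop :=
  forall x : X, exists s : seq X -> set X, winning_strategyI x s.

From HB Require Import structures.
From mathcomp Require Import all_boot all_order.
From mathcomp Require Import all_classical all_reals all_analysis.
From Stdlib Require List.
Set Implicit Arguments. Unset Strict Implicit. Unset Printing Implicit Defensive.
Local Open Scope classical_set_scope.

(* Enumerate Y as y_0, y_1, ... and choose f(y_n) at stage n, maintaining
   finitely many constraints "f maps the closed neighbourhood K of c into the
   open set O".  Whenever c and the points of a finite list l already have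
   their values, the answer O of the winning strategy at f(c) to the history
   f(l) contains f(c); lower semicontinuity and regularity of Y provide a
   closed neighbourhood K of c on which this constraint can be added without
   making any remaining choice impossible.  As every pair (c, l) is treated at
   some stage, f^-1(O) is a neighbourhood of c for every history.  If f were
   discontinuous at c, player II could then answer every history of player I
   with a value of f outside a fixed neighbourhood of f(c), defeating the
   winning strategy. *)

Lemma open_seqI (T : topologicalType) (I : Type) (s : seq I) (P : I -> Prop)
    (U : I -> set T) :
  (forall i, List.In i s -> P i -> open (U i)) ->
  open [set x | forall i, List.In i s -> P i -> U i x].
Proof.
elim: s => [_ | i s IHs oU].
  rewrite (_ : [set x | _] = setT); first exact: openT.
  by apply/seteqP; split=> // x _ j [].
rewrite (_ : [set x | _] =
    [set x | P i -> U i x] `&` [set x | forall j, List.In j s -> P j -> U j x]).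
  apply: openI; last by apply: IHs => j js; apply: oU; right.
  case: (pselect (P i)) => Pi.
    rewrite (_ : [set x | _] = U i); first by apply: oU => //; left.
    by apply/seteqP; split=> x /= => [/(_ Pi) | Ux _].
  rewrite (_ : [set x | _] = setT); first exact: openT.
  by apply/seteqP; split=> // x _ /Pi.
apply/seteqP; split=> x /=.
- by move=> Ux; split=> [|j js]; apply: Ux; [left | right].
- by move=> [Uix Usx] j [<- // | js]; exact: Usx.
Qed.

(* Every x occurs at all indices 2^(pickle x) * odd. *)
Definition visit {T : countType} (n : nat) : option T := unpickle (logn 2 n).

Lemma visit_unbounded (T : countType) (x : T) (B : nat) :
  exists2 n, (B <= n)%N & visit n = Some x.
Proof.
exists (2 ^ pickle x * B.*2.+1).
  apply: (@leq_trans B.*2.+1); first by rewrite -addnn ltnW // ltnS leq_addr.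
  by rewrite leq_pmull // expn_gt0.
rewrite /visit lognM ?expn_gt0 // pfactorK // logn_coprime ?addn0 ?pickleK //.
by rewrite coprime_sym coprimen2 /= odd_double.
Qed.

Lemma winning_strategy_continuous_at (Y X : topologicalType) (f : Y -> X)
    (c : Y) (s : seq X -> set X) :
  winning_strategyI (f c) s ->
  (forall l : seq Y, nbhs c (f @^-1` s (map f l))) -> {for c, continuous f}.
Proof.
move=> [_ win] near_c U fcU; apply: contrapT => not_near.
have escape l : exists y, s (map f l) (f y) /\ ~ U (f y).
  apply: contrapT => none; apply: not_near; apply: filterS (near_c l) => y sy.
  by apply: contrapT => nUy; apply: none; exists y.
have [pick pickP] := choice escape.
pose hist n := iter n (fun l => rcons l (pick l)) [::].
pose u n := f (pick (hist n)).
have hist_mkseq n : map f (hist n) = mkseq u n.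
  by elim: n => [// | n IHn]; rewrite mkseqS -IHn /= map_rcons.
have play n : s (mkseq u n) (u n) by rewrite -hist_mkseq; exact: (pickP _).1.
have /filter_ex [n Un] : \forall n \near \oo, U (u n) by exact: win u play U fcU.
exact: (pickP (hist n)).2 Un.
Qed.

Section SelectionConstruction.
Variables (Y X : topologicalType) (phi : Y -> set X).
Hypotheses (Yacc : accessible_space Y) (Yreg : regular_space Y)
  (phi_lsc : lsc_map phi).
Variables (idx : Y -> nat) (req : nat -> option (Y * seq Y)).
Hypotheses (idx_inj : injective idx)
  (req_unbounded : forall p B, exists2 n, (B <= n)%N & req n = Some p).
Variable sigma : X -> seq X -> set X.
Hypothesis sigma_win : forall x, winning_strategyI x (sigma x).

Record constraint := Constraint { centre : Y; target : set X; domain : set Y }.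

Definition respects (C : seq constraint) (y : Y) (x : X) : Prop :=
  forall t, List.In t C -> domain t y -> target t x.

Definition constraint_ok (t : constraint) : Prop :=
  [/\ open (target t), closed (domain t) & nbhs (centre t) (domain t)].

(* At stage n the values F y with idx y < n are final. *)
Definition stage_inv (n : nat) (F : Y -> X) (C : seq constraint) : Prop :=
  [/\ forall y, (idx y < n)%N -> phi y (F y) /\ respects C y (F y),
      forall t, List.In t C -> constraint_ok t &
      forall y, (n <= idx y)%N -> exists2 x, phi y x & respects C y x].

Lemma stage_extend n F C : stage_inv n F C ->
  exists2 F', stage_inv n.+1 F' C & forall y, (idx y < n)%N -> F' y = F y.
Proof.
case=> sel ok feas.
have /choice [G HG] :
    forall y, exists x, (n <= idx y)%N -> phi y x /\ respects C y x.
  move=> y; case: (leqP n (idx y)) => [/feas [x phix Cx] | _]; first by exists x.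
  by exists (F y).
exists (fun y => if (idx y < n)%N then F y else G y); last by move=> y ->.
split=> // y; last by move=> /ltnW /feas.
by move=> _; case: ifPn => [/sel // | ]; rewrite -leqNgt => /HG.
Qed.

Lemma stage_add_constraint n F C c O : stage_inv n F C -> (idx c < n)%N ->
  open O -> O (F c) -> exists K, stage_inv n F (Constraint c O K :: C).
Proof.
move=> [sel ok feas] cn oO OFc.
set G := O `&` [set x | respects C c x].
(* Every old domain meeting W contains c, so on W a value in G respects all
   the constraints; and c is the only point of W whose value is already fixed. *)
set W := [set y | phi y `&` G !=set0]
  `&` [set y | forall t, List.In t C -> ~ domain t c -> ~ domain t y]
  `&` ~` ([set y | (idx y < n)%N] `\ c).
have oW : open W.
  apply: openI; first (apply: openI; first apply: phi_lsc.2).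
  - by apply: openI => //; apply: open_seqI => t /ok[].
  - apply: (open_seqI (U := fun t => ~` domain t)) => t /ok[_ + _] _.
    by rewrite openC.
  - rewrite openC; apply: (accessible_finite_set_closed.1 Yacc).
    apply: finite_setD.
    exact: (finite_preimage (B := `I_n) (in2W idx_inj)).
have Wc : W c.
  have [phiFc CFc] := sel c cn.
  split; [split=> /= [| t _ //] | by move=> [_ /(_ erefl)]].
  by exists (F c).
have [B Bc BW] := Yreg (open_nbhs_nbhs (conj oW Wc)).
exists (closure B); split.
- move=> y yn; have [phiFy CFy] := sel y yn.
  split=> // t [<- /BW [_ Wy] | /CFy //].
  suff -> : y = c by [].
  by apply: contrapT => yc; exact: Wy (conj yn yc).
- move=> t [<- | /ok //]; split=> //; first exact: closed_closure.
  by apply: filterS Bc; exact: subset_closure.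
- move=> y ny; have [x phix Cx] := feas y ny.
  case: (pselect (closure B y)) => [/BW [[[x' [phix' [Ox' Cx']]] avoid] _] | nBy].
    exists x' => // t [<- // | tC dty]; apply: Cx' => //.
    by apply: contrapT => ndc; exact: avoid t tC ndc dty.
  by exists x => // t [<- // | ]; exact: Cx.
Qed.

Definition honours (n : nat) (F : Y -> X) (C : seq constraint) : Prop :=
  forall c l, req n = Some (c, l) ->
    (idx c <= n)%N -> all (fun z => idx z <= n)%N l ->
    exists K, List.In (Constraint c (sigma (F c) (map F l)) K) C.

Definition next_stage n (F : Y -> X) C (F' : Y -> X) C' : Prop :=
  [/\ stage_inv n.+1 F' C', forall y, (idx y < n)%N -> F' y = F y,
      forall t, List.In t C -> List.In t C' & honours n F' C'].

Lemma stage_step n F C : stage_inv n F C -> exists F' C', next_stage n F C F' C'.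
Proof.
move=> /stage_extend [F' inv' agree].
case: (pselect (exists c l,
    [/\ req n = Some (c, l), (idx c <= n)%N & all (fun z => idx z <= n)%N l]))
  => [[c [l [rq cn ln]]] | norq]; last first.
  by exists F', C; split=> // c l rq cn ln; case: norq; exists c, l.
have [oO OFc] := (sigma_win (F' c)).1 (map F' l).
have [K invK] := stage_add_constraint inv' cn oO OFc.
exists F', (Constraint c (sigma (F' c) (map F' l)) K :: C).
split=> // [t | c' l']; first by right.
by rewrite rq => -[<- <-] _ _; exists K; left.
Qed.

Lemma stages_exist : exists S : nat -> (Y -> X) * seq constraint,
  forall n, stage_inv n (S n).1 (S n).2 /\
            next_stage n (S n).1 (S n).2 (S n.+1).1 (S n.+1).2.
Proof.
have /choice [next Hnext] : forall p : nat * ((Y -> X) * seq constraint),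
    exists q, stage_inv p.1 p.2.1 p.2.2 -> next_stage p.1 p.2.1 p.2.2 q.1 q.2.
  move=> [n [F C]]; case: (pselect (stage_inv n F C)) => [/stage_step | ninv].
    by move=> [F' [C' nxt]]; exists (F', C').
  by exists (F, C) => /ninv.
have [F0 phiF0] := choice phi_lsc.1.
pose S := fix S n := if n is m.+1 then next (m, S m) else (F0, [::]).
suff S_inv n : stage_inv n (S n).1 (S n).2.
  by exists S => n; split; last exact: Hnext (n, S n) (S_inv n).
elim: n => [| n IHn]; last by case: (Hnext (n, S n) IHn).
by split=> // y _; exists (F0 y).
Qed.

Section Limit.
Variable S : nat -> (Y -> X) * seq constraint.
Hypothesis S_stage : forall n, stage_inv n (S n).1 (S n).2 /\
  next_stage n (S n).1 (S n).2 (S n.+1).1 (S n.+1).2.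

Lemma stage_agree m m' y : (m <= m')%N -> (idx y < m)%N -> (S m').1 y = (S m).1 y.
Proof.
move=> /subnK <- ym; elim: (m' - m) => [// | k IHk].
by case: (S_stage (k + m)) => _ [_ -> //]; rewrite (leq_trans ym) ?leq_addl.
Qed.

Lemma stage_persist m m' t : (m <= m')%N ->
  List.In t (S m).2 -> List.In t (S m').2.
Proof.
move=> /subnK <- tm; elim: (m' - m) => [// | k IHk].
by case: (S_stage (k + m)) => _ [_ _ /(_ t IHk)].
Qed.

Definition limit (y : Y) : X := (S (idx y).+1).1 y.

Lemma stage_limit m y : (idx y < m)%N -> (S m).1 y = limit y.
Proof. by move=> ym; apply: stage_agree ym (ltnSn _). Qed.

Lemma limit_respects m t y :
  List.In t (S m).2 -> domain t y -> target t (limit y).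
Proof.
move=> tm; pose m' := maxn m (idx y).+1.
have [[/(_ y (leq_maxr _ _)) [_ Cy] _ _] _] := S_stage m'.
rewrite -(stage_limit (leq_maxr m _)); apply: Cy => //.
exact: stage_persist (leq_maxl _ _) tm.
Qed.

Lemma limit_selection y : phi y (limit y).
Proof. by case: (S_stage (idx y).+1) => -[/(_ y (ltnSn _)) []]. Qed.

Lemma limit_preimage_nbhs c l :
  nbhs c (limit @^-1` sigma (limit c) (map limit l)).
Proof.
have [n Bn rq] := req_unbounded (c, l) (\max_(z <- c :: l) idx z).
have below z : z \in c :: l -> (idx z < n.+1)%N.
  by move=> zl; rewrite ltnS (leq_trans _ Bn) // leq_bigmax_seq.
have below_c := below c (mem_head _ _).
have below_l z : z \in l -> (idx z < n.+1)%N.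
  by move=> zl; apply: below; rewrite in_cons zl orbT.
have [_ [_ _ _ /(_ c l rq below_c) honour]] := S_stage n.
have [K KC] : exists K,
    List.In (Constraint c (sigma ((S n.+1).1 c) (map (S n.+1).1 l)) K) (S n.+1).2.
  by apply: honour; apply/allP.
have map_limit : map (S n.+1).1 l = map limit l.
  by apply/eq_in_map => z /below_l /stage_limit.
rewrite map_limit (stage_limit below_c) in KC.
have [[_ /(_ _ KC) [_ _ Kc] _] _] := S_stage n.+1.
by apply: filterS Kc => y; exact: limit_respects KC.
Qed.

Lemma limit_continuous : continuous limit.
Proof.
by move=> c; apply: winning_strategy_continuous_at (sigma_win _) _ => l;
  exact: limit_preimage_nbhs.
Qed.

End Limit.

Lemma continuous_selection_exists :
  exists f : Y -> X, continuous f /\ forall y, phi y (f y).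
Proof.
have [S S_stage] := stages_exist.
exists (limit S); split; [exact: limit_continuous | exact: limit_selection].
Qed.

End SelectionConstruction.

Theorem mainTheorem1 (X : topologicalType) :
  @accessible_space X -> W_space X -> strongly_C_selective X.
Proof.
move=> _ XW Y Yacc Yreg /pcard_leP /unsquash code phi phi_lsc.
pose Yc : countType := HB.pack (Y : Type) (PCanIsCountable (in1TT 'funoK_code)).
have [sigma sigma_win] := choice XW.
exact: (continuous_selection_exists Yacc Yreg phi_lsc (pcan_inj (@pickleK Yc))
  (@visit_unbounded (Yc * seq Yc)%type) sigma_win).
Qed.
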